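(* Let $n>2$ and $q>0$ be integers such that $n$ is even or $q$ is odd. Then for every prime $p>\max\{n,(q-1)n+1\}$, $$ p^n\sum_{k=0}^{p-1}\frac{(1)_k^n}{(\frac{p}{n}-q+2)_k^n}\equiv0\pmod{p^3}. $$
   Context: $(x)_k$ denotes the Pochhammer symbol: $(x)_0=1$ and $(x)_k=x(x+1)\cdots(x+k-1)$ for $k>0$. A congruence between rational numbers modulo $p^m$ means their difference lies in $p^m\mathbb{Z}_{(p)}$, where $\mathbb{Z}_{(p)}$ is the ring of rationals whose denominators are coprime to $p$. *)

From mathcomp Require Import all_boot all_order all_algebra.
Set Implicit Arguments. Unset Strict Implicit. Unset Printing Implicit Defensive.
Import Order.TTheory GRing.Theory Num.Theory.
Local Open Scope ring_scope.

Definition poch (x : rat) (k : nat) : rat := \prod_(i < k) (x + i%:R).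

(* x = y (mod p^m) for rationals: x - y lies in p^m Z_(p), i.e.
   x - y = p^m * a / b with a an integer and b a positive integer coprime to p. *)
Definition rat_cong_mod (p m : nat) (x y : rat) : Prop :=
  exists (a : int) (b : nat),
    (0 < b)%N /\ coprime b p /\ x - y = (p ^ m)%N%:R * a%:~R / b%:R.

From HB Require Import structures.
From mathcomp Require Import all_boot all_order all_algebra.
From mathcomp Require Import ring lra zify.
Set Implicit Arguments. Unset Strict Implicit. Unset Printing Implicit Defensive.
Import Order.TTheory GRing.Theory Num.Theory.
Local Open Scope ring_scope.

(* Write q = r + 2 (for q = 1 every term is p^n times a p-adic integer).  The
   terms with k <= r are again p^n times p-adic integers, and the term of index
   k = r + 1 + m is a p-adic integer times V(m) w(m), where
   V(x) = ((x + 1) ... (x + r + 1))^n has degree < p - 1 and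
   w(m) = ((1)_m / (1 + p/n)_m)^n.  Completing the sum over m to 0 <= m < p
   only adds terms divisible by p^n.
   Let F be the antidifference of V with F(0) = 0 and F_2 its coefficient of
   x^2.  Since w(m) = 1 (mod p), w(p - 1) = 1 (mod p^2) (the harmonic sum
   H_(p-1) vanishes mod p) and
   (m + 1)(w(m) - w(m + 1)) = w(m + 1)(p + C(n,2) p^2 / (n^2 (m + 1))) (mod p^3),
   Abel summation against F reduces sum_(m < p) V(m) w(m) to p^2 F_2 mod p^3.
   Finally V(-q - x) = V(x) (this is where the parity hypothesis enters) and
   V(-1) = ... = V(1 - q) = 0 give F(x) + F(1 - q - x) = 0; as V(m) = 0
   (mod p^n) for p - q < m < p, this yields F(p) + F(-p) = 0 (mod p^3), i.e.
   2 p^2 F_2 = 0 (mod p^3). *)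

(* [pint p] is the ring Z_(p) and [pdvd p k] its ideal p^k Z_(p). *)
Definition pint (p : nat) : pred rat := fun x => coprime `|denq x| p.

Definition pdvd (p k : nat) : pred rat := fun x => x / p%:R ^+ k \in pint p.

Lemma pintE p x : (x \in pint p) = coprime `|denq x| p. Proof. by []. Qed.

Lemma pdvdE p k x : (x \in pdvd p k) = (x / p%:R ^+ k \in pint p). Proof. by []. Qed.

Lemma denq_dvdn (x : rat) (b : nat) :
  (0 < b)%N -> x * b%:R \is a Num.int -> (`|denq x| %| b)%N.
Proof.
move=> b_gt0 /intrP[a xb].
have nb : numq x * b%:Z = a * denq x.
  by apply: (@intr_inj rat); rewrite !rmorphM /= numqE -xb mulrAC.
have := congr1 absz nb; rewrite !abszM absz_nat => e.
rewrite -(@Gauss_dvdl _ _ `|numq x|) 1?coprime_sym ?coprime_num_den //.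
by rewrite mulnC e dvdn_mull.
Qed.

Lemma pintP p x :
  reflect (exists2 b : nat, coprime b p & x * b%:R \is a Num.int) (x \in pint p).
Proof.
apply: (iffP idP) => [x_pint | [[|b] bp xb]].
- exists `|denq x|%N => //.
  by rewrite natr_absz gtr0_norm ?denq_gt0 // -numqE intr_int.
- by move: bp; rewrite /coprime gcd0n => /eqP->; rewrite pintE coprimen1.
- by rewrite pintE (coprime_dvdl (denq_dvdn _ xb) bp).
Qed.

Fact pint_subring_closed p : subring_closed (pint p).
Proof.
split=> [|x y /pintP[b bp xb] /pintP[d dp yd]|x y /pintP[b bp xb] /pintP[d dp yd]].
- by apply/pintP; exists 1%N; rewrite ?coprime1n // mulr1 rpred1.
- apply/pintP; exists (b * d)%N; first by rewrite coprimeMl bp dp.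
  have -> : (x - y) * (b * d)%N%:R = x * b%:R * d%:R - y * d%:R * b%:R.
    by rewrite natrM; ring.
  by apply: rpredB; apply: rpredM; rewrite ?rpred_nat.
- apply/pintP; exists (b * d)%N; first by rewrite coprimeMl bp dp.
  have -> : x * y * (b * d)%N%:R = x * b%:R * (y * d%:R) by rewrite natrM; ring.
  by rewrite rpredM.
Qed.

HB.instance Definition _ p :=
  GRing.isSubringClosed.Build rat (pint p) (pint_subring_closed p).

Fact pdvd_zmod_closed p k : zmod_closed (pdvd p k).
Proof.
by split=> [|x y]; rewrite !pdvdE ?mul0r ?rpred0 // mulrBl => *; apply: rpredB.
Qed.

HB.instance Definition _ p k :=
  GRing.isZmodClosed.Build rat (pdvd p k) (pdvd_zmod_closed p k).

Lemma pint_divn p (a b : nat) : coprime b p -> a%:R / b%:R \in pint p.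
Proof.
case: b => [|b] bp; first by rewrite invr0 mulr0 rpred0.
by apply/pintP; exists b.+1 => //; rewrite divfK ?pnatr_eq0 // rpred_nat.
Qed.

Lemma pint_invn p (b : nat) : coprime b p -> b%:R^-1 \in pint p.
Proof. by move=> /(pint_divn 1); rewrite div1r. Qed.

Lemma coprime_addn_self m n : coprime (m + n) n = coprime m n.
Proof. by rewrite coprime_sym /coprime gcdnDr -/(coprime n m) coprime_sym. Qed.

Section PrimeDivisibility.
Variable p : nat.
Hypothesis p_prime : prime p.

Let p_neq0 : (p%:R : rat) != 0.
Proof. by rewrite pnatr_eq0 -lt0n prime_gt0. Qed.

Lemma coprime_lt_prime b : (0 < b < p)%N -> coprime b p.
Proof.
case/andP=> b_gt0 b_lt_p; rewrite coprime_sym prime_coprime //.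
by apply/negP => /(dvdn_leq b_gt0); rewrite leqNgt b_lt_p.
Qed.

Lemma pdvd0E x : (x \in pdvd p 0) = (x \in pint p).
Proof. by rewrite pdvdE expr0 divr1. Qed.

Lemma pdvd_pXM k l y : (p%:R ^+ k * y \in pdvd p (k + l)) = (y \in pdvd p l).
Proof. by rewrite !pdvdE exprD invfM mulrACA divff ?mul1r // expf_neq0. Qed.

Lemma pdvd_pXM_pint k y : (p%:R ^+ k * y \in pdvd p k) = (y \in pint p).
Proof. by have := pdvd_pXM k 0 y; rewrite addn0 pdvd0E. Qed.

Lemma pdvd_pM_pint y : (p%:R * y \in pdvd p 1) = (y \in pint p).
Proof. by rewrite -[p%:R]expr1 pdvd_pXM_pint. Qed.

Lemma pdvd_pX k : p%:R ^+ k \in pdvd p k.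
Proof. by rewrite -[_ ^+ k]mulr1 pdvd_pXM_pint rpred1. Qed.

Lemma pdvd_p : p%:R \in pdvd p 1.
Proof. by rewrite -[p%:R]expr1 pdvd_pX. Qed.

Lemma pdvdMl k x y : x \in pint p -> y \in pdvd p k -> x * y \in pdvd p k.
Proof. by rewrite !pdvdE -mulrA; apply: rpredM. Qed.

Lemma pdvdMr k x y : x \in pdvd p k -> y \in pint p -> x * y \in pdvd p k.
Proof. by rewrite mulrC => *; apply: pdvdMl. Qed.

Lemma pdvdM k l x y : x \in pdvd p k -> y \in pdvd p l -> x * y \in pdvd p (k + l).
Proof. by rewrite !pdvdE exprD invfM mulrACA; apply: rpredM. Qed.

Lemma pdvdW k l : (k <= l)%N -> {subset pdvd p l <= pdvd p k}.
Proof.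
move=> kl x; rewrite !pdvdE => xl.
have -> : x / p%:R ^+ k = x / p%:R ^+ l * p%:R ^+ (l - k).
  by rewrite -{1}(subnKC kl) exprD invfM mulrA divfK // expf_neq0.
by rewrite rpredM ?rpredX ?rpred_nat.
Qed.

Lemma pdvd_pint k : {subset pdvd p k <= pint p}.
Proof. by move=> x /(pdvdW (leq0n k)); rewrite pdvd0E. Qed.

Lemma pdvd_rat_cong_mod m x : x \in pdvd p m -> rat_cong_mod p m x 0.
Proof.
rewrite pdvdE pintE => xm; exists (numq (x / p%:R ^+ m)), `|denq (x / p%:R ^+ m)|%N.
rewrite absz_gt0 denq_neq0; split=> //; split=> //.
rewrite subr0 natrX -mulrA natr_absz gtr0_norm ?denq_gt0 // divq_num_den.
by rewrite mulrC divfK // expf_neq0.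
Qed.

Lemma harmonic_pdvd : (2 < p)%N -> \sum_(m < p.-1) (m.+1%:R)^-1 \in pdvd p 1.
Proof.
move=> p_gt2; set H := \sum_(m < p.-1) _.
have pairs : H + H = \sum_(m < p.-1) p%:R * ((m.+1 * (p - m.+1))%:R)^-1.
  rewrite {2}/H (reindex_inj rev_ord_inj) -big_split /=; apply: eq_bigr => m _.
  have m_lt := ltn_ord m; have -> : ((p.-1 - m.+1).+1 = p - m.+1)%N by lia.
  have -> : p%:R = (m.+1 + (p - m.+1))%N%:R :> rat by rewrite subnKC //; lia.
  have : ((p - m.+1)%:R : rat) != 0 by rewrite pnatr_eq0; lia.
  by rewrite natrD natrM => nz; field; rewrite nz addrC natr1 pnatr_eq0.
have -> : H = (H + H) * 2%:R^-1 by field.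
rewrite pdvdMr ?pint_invn ?coprime_lt_prime // pairs rpred_sum // => m _.
have m_lt := ltn_ord m.
by rewrite pdvd_pM_pint pint_invn // coprimeMl !coprime_lt_prime //; lia.
Qed.

Lemma prod1D_pdvd2 (I : Type) (r : seq I) (P : pred I) (F : I -> rat) :
    (forall i, P i -> F i \in pdvd p 1) ->
  \prod_(i <- r | P i) (1 + F i) - 1 - \sum_(i <- r | P i) F i \in pdvd p 2.
Proof.
move=> F1; elim: r => [|i r IH]; first by rewrite !big_nil !subrr rpred0.
rewrite !big_cons; case: ifP => // Pi.
set A := \prod_(j <- r | P j) _; set B := \sum_(j <- r | P j) _ in IH *.
have -> : (1 + F i) * A - 1 - (F i + B) = (1 + F i) * (A - 1 - B) + F i * B by ring.
have B1 : B \in pdvd p 1 by apply: rpred_sum.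
rewrite rpredD ?(pdvdM (F1 i Pi) B1) // pdvdMl //.
by rewrite rpredD ?rpred1 ?(pdvd_pint (F1 i Pi)).
Qed.

Lemma prod1D_pdvd1 (I : Type) (r : seq I) (P : pred I) (F : I -> rat) :
    (forall i, P i -> F i \in pdvd p 1) ->
  \prod_(i <- r | P i) (1 + F i) - 1 \in pdvd p 1.
Proof.
move=> F1; rewrite -[_ - 1](subrK (\sum_(i <- r | P i) F i)).
by rewrite rpredD ?rpred_sum // (@pdvdW 1 2) // prod1D_pdvd2.
Qed.

Lemma exp1D_pdvd3 u k : u \in pdvd p 1 ->
  (1 + u) ^+ k - 1 - k%:R * u - 'C(k, 2)%:R * u ^+ 2 \in pdvd p 3.
Proof.
move=> u1; elim: k => [|k IH].
  by rewrite expr0 bin0n !mul0r !subr0 subrr rpred0.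
have -> : (1 + u) ^+ k.+1 - 1 - k.+1%:R * u - 'C(k.+1, 2)%:R * u ^+ 2 =
    (1 + u) * ((1 + u) ^+ k - 1 - k%:R * u - 'C(k, 2)%:R * u ^+ 2)
    + 'C(k, 2)%:R * (u * u ^+ 2).
  by rewrite binS bin1 exprS natrD -natr1; ring.
have u2 : u ^+ 2 \in pdvd p 2 by rewrite expr2 (pdvdM u1 u1).
rewrite rpredD //; first by rewrite pdvdMl // rpredD ?rpred1 ?(pdvd_pint u1).
by rewrite pdvdMl ?rpred_nat // (pdvdM u1 u2).
Qed.

Lemma subX1_pdvd k x m : x \in pint p -> x - 1 \in pdvd p k -> x ^+ m - 1 \in pdvd p k.
Proof.
by move=> x_int x1; rewrite subrX1 pdvdMr // rpred_sum // => i _; rewrite rpredX.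
Qed.

End PrimeDivisibility.

Section PolyAux.
Variable R : comNzRingType.
Implicit Types (P F : {poly R}) (x : R).

Lemma horner_take_drop P k x :
  P.[x] = \sum_(i < k) P`_i * x ^+ i + x ^+ k * (drop_poly k P).[x].
Proof.
by rewrite -{1}(poly_take_drop k P) hornerD hornerM hornerXn horner_poly mulrC.
Qed.

Lemma horner_coef0_eq0 P x : P`_0 = 0 -> P.[x] = x * (drop_poly 1 P).[x].
Proof. by move=> P0; rewrite (horner_take_drop _ 1) big_ord1 P0 mul0r add0r expr1. Qed.

Lemma polyOver_drop_poly (S : addrClosed R) k P :
  P \is a polyOver S -> drop_poly k P \is a polyOver S.
Proof. by move=> /polyOverP SP; apply/polyOverP => i; rewrite coef_drop_poly. Qed.

Lemma XaddC1_expS_subXn k :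
  ('X + 1) ^+ k.+1 - 'X^(k.+1) = \poly_(i < k.+1) 'C(k.+1, i)%:R :> {poly R}.
Proof.
rewrite exprD1n big_ord_recr /= binn mulr1n addrK poly_def.
by apply: eq_bigr => i _; rewrite scaler_nat.
Qed.

Lemma sum_antidifference P F K :
    (forall x, F.[x + 1] - F.[x] = P.[x]) ->
  \sum_(m < K) P.[m%:R] = F.[K%:R] - F.[0].
Proof.
move=> dF; rewrite -(big_mkord xpredT (fun m => P.[m%:R])).
by apply: (telescope_sumr_eq (fun m => F.[m%:R])) => // m _; rewrite -natr1 dF.
Qed.

Lemma sumr_by_parts (u v : nat -> R) K :
  \sum_(m < K.+1) (u m.+1 - u m) * v m =
    u K.+1 * v K - u 0%N * v 0%N + \sum_(m < K) u m.+1 * (v m - v m.+1).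
Proof.
elim: K => [|K IH]; first by rewrite big_ord1 big_ord0 addr0 mulrBl.
by rewrite big_ord_recr IH big_ord_recr /=; ring.
Qed.

Lemma sum_horner_by_parts P F (w : nat -> R) K :
    F`_0 = 0 -> (forall x, F.[x + 1] - F.[x] = P.[x]) ->
  \sum_(m < K.+1) P.[m%:R] * w m = F.[K.+1%:R] * w K
    + \sum_(m < K) (drop_poly 1 F).[m.+1%:R] * (m.+1%:R * (w m - w m.+1)).
Proof.
move=> F0 dF; under eq_bigr do rewrite -dF natr1.
rewrite (sumr_by_parts (fun m => F.[m%:R])) horner_coef0 F0 mul0r subr0.
by congr (_ + _); apply: eq_bigr => m _; rewrite (horner_coef0_eq0 _ F0) mulrCA mulrA.
Qed.

End PolyAux.

Lemma sum_ord_split (V : nmodType) (F : nat -> V) n k : (k <= n)%N ->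
  \sum_(i < n) F i = \sum_(i < k) F i + \sum_(i < n - k) F (k + i)%N.
Proof.
move=> kn; rewrite -!(big_mkord xpredT) (big_cat_nat (leq0n k) kn) (big_addn 0 n k) /=.
by congr (_ + _); rewrite big_mkord; apply: eq_bigr => i _; rewrite addnC.
Qed.

Section PIntegralPoly.
Variable p : nat.
Hypothesis p_prime : prime p.
Implicit Types P Q F V : {poly rat}.

Lemma pint_antidifference P : P \is a polyOver (pint p) -> (size P < p)%N ->
  exists2 F, F \is a polyOver (pint p) &
    [/\ F`_0 = 0, (size F <= p)%N & forall x, F.[x + 1] - F.[x] = P.[x]].
Proof.
suff: forall N Q, (size Q <= N)%N -> (N < p)%N -> Q \is a polyOver (pint p) ->
    exists2 F, F \is a polyOver (pint p) &
      [/\ F`_0 = 0, (size F <= N.+1)%N & forall x, F.[x + 1] - F.[x] = Q.[x]].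
  move=> ex Pint Psize; have p_gt0 := prime_gt0 p_prime.
  by have := ex p.-1 P; rewrite prednK //; apply=> //; lia.
elim=> [|N IH] Q Qsize N_lt_p Qint.
  exists 0; rewrite ?polyOver0 // coef0 size_poly0; split=> // x.
  by move: Qsize; rewrite size_poly_leq0 => /eqP->; rewrite !horner0 subrr.
have N1_neq0 : (N.+1%:R : rat) != 0 by rewrite pnatr_eq0.
set c := Q`_N / N.+1%:R.
have c_int : c \in pint p.
  by rewrite rpredM ?(polyOverP Qint) ?pint_invn ?coprime_lt_prime.
(* [B] is ('X + 1)^(N+1) - 'X^(N+1); its coefficient of 'X^N is N + 1. *)
set B := \poly_(i < N.+1) ('C(N.+1, i)%:R : rat).
have [|||F Fint [F0 Fsize dF]] := IH (Q - c *: B).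
- apply/leq_sizeP => j; rewrite leq_eqVlt => /orP[/eqP<- | Nj].
    by rewrite coefB coefZ coef_poly ltnSn binSn /c divfK ?subrr.
  by rewrite coefB coefZ coef_poly ltnNge Nj (leq_sizeP _ _ Qsize) // mulr0 subrr.
- exact: ltnW.
- by rewrite rpredB ?polyOverZ ?polyOver_poly // => i _; rewrite rpred_nat.
exists (F + c *: 'X^(N.+1)); first by rewrite rpredD ?polyOverZ ?polyOverXn.
split.
- by rewrite coefD coefZ coefXn F0 mulr0 addr0.
- rewrite (leq_trans (size_polyD _ _)) // geq_max (leq_trans Fsize) //.
  by rewrite (leq_trans (size_scale_leq _ _)) // size_polyXn.
- move=> x; have dX := congr1 (fun P => P.[x]) (XaddC1_expS_subXn rat N).
  rewrite /= !hornerE -/B in dX.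
  have -> : Q.[x] = F.[x + 1] - F.[x] + c * B.[x].
    by rewrite dF hornerD hornerN hornerZ subrK.
  by rewrite -dX !hornerE; ring.
Qed.

Lemma horner_sub_coef0_pdvd1 F x : F \is a polyOver (pint p) ->
  x \in pdvd p 1 -> F.[x] - F`_0 \in pdvd p 1.
Proof.
move=> Fint x1; rewrite (horner_take_drop _ 1) big_ord1 expr0 mulr1 expr1.
rewrite [F`_0 + _]addrC addrK pdvdMr //.
by apply: rpred_horner; [apply: polyOver_drop_poly | apply: pdvd_pint x1].
Qed.

Lemma horner_pdvd1 F x : F \is a polyOver (pint p) -> F`_0 = 0 ->
  x \in pdvd p 1 -> F.[x] \in pdvd p 1.
Proof. by move=> Fint F0 /(horner_sub_coef0_pdvd1 Fint); rewrite F0 subr0. Qed.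

Lemma sum_horner_pdvd1 P : P \is a polyOver (pint p) -> (size P < p)%N ->
  \sum_(m < p) P.[m%:R] \in pdvd p 1.
Proof.
move=> Pint Psize; have [F Fint [F0 _ dF]] := pint_antidifference Pint Psize.
by rewrite (sum_antidifference _ dF) horner_coef0 F0 subr0 horner_pdvd1 // pdvd_p.
Qed.

Lemma antidifference_reflect V F q :
    (forall x, F.[x + 1] - F.[x] = V.[x]) -> F`_0 = 0 -> (0 < q)%N ->
    (forall i, (0 < i < q)%N -> V.[- i%:R] = 0) ->
    (forall x, V.[- q%:R - x] = V.[x]) ->
  forall m, F.[m%:R] + F.[1 - q%:R - m%:R] = 0.
Proof.
move=> dF F0 q_gt0 Vroot Vsym.
have F_neg j : (j < q)%N -> F.[- j%:R] = 0.
  elim: j => [_|j IH j_lt]; first by rewrite oppr0 horner_coef0.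
  have := dF (- j.+1%:R); rewrite Vroot ?j_lt // -natr1 opprD subrK (IH (ltnW j_lt)).
  by move/eqP; rewrite sub0r oppr_eq0 => /eqP.
elim=> [|m IH].
  have [k qk] : exists k, q = k.+1 by exists q.-1; rewrite prednK.
  have -> : 1 - q%:R - 0%:R = - k%:R :> rat by rewrite qk -natr1; ring.
  by rewrite horner_coef0 F0 add0r F_neg // qk.
have d1 := dF m%:R; have d2 := dF (- q%:R - m%:R).
rewrite Vsym (_ : - q%:R - m%:R + 1 = 1 - q%:R - m%:R) in d2; last by ring.
have -> : 1 - q%:R - m.+1%:R = - q%:R - m%:R :> rat by rewrite -natr1; ring.
by rewrite -natr1; lra.
Qed.

Lemma antidifference_coef2_pdvd1 V F q : (2 < p)%N ->
    F \is a polyOver (pint p) -> F`_0 = 0 ->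
    (forall x, F.[x + 1] - F.[x] = V.[x]) -> (0 < q <= p)%N ->
    (forall i, (0 < i < q)%N -> V.[- i%:R] = 0) ->
    (forall x, V.[- q%:R - x] = V.[x]) ->
    (forall m, (p - q < m < p)%N -> V.[m%:R] \in pdvd p 3) ->
  F`_2 \in pdvd p 1.
Proof.
move=> p_gt2 Fint F0 dF /andP[q_gt0 q_le_p] Vroot Vsym Vtop.
set m0 := (p - q).+1.
have Ftop : F.[p%:R] - F.[m0%:R] \in pdvd p 3.
  rewrite -(telescope_sumr_eq (fun m => F.[m%:R]) (fun m => V.[m%:R])); first last.
  - by move=> m _; rewrite -natr1 dF.
  - by rewrite /m0; lia.
  rewrite big_nat_cond rpred_sum // => m /andP[/andP[lo hi] _].
  by apply: Vtop; apply/andP.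
have Fneg : F.[- p%:R] = - F.[m0%:R].
  have := antidifference_reflect dF F0 q_gt0 Vroot Vsym m0.
  have -> : 1 - q%:R - m0%:R = - p%:R :> rat by rewrite /m0 -natr1 natrB //; ring.
  by rewrite addrC => /eqP; rewrite addr_eq0 => /eqP.
set D := drop_poly 3 F.
have Fodd : F.[p%:R] + F.[- p%:R] =
    p%:R ^+ 2 * (2%:R * F`_2) + p%:R ^+ 3 * (D.[p%:R] - D.[- p%:R]).
  by rewrite !(horner_take_drop F 3) -/D !big_ord_recr !big_ord0 /= F0; ring.
have : p%:R ^+ 2 * (2%:R * F`_2) \in pdvd p (2 + 1).
  have D_int x : x \in pint p -> D.[x] \in pint p.
    by move=> x_int; apply: rpred_horner => //; apply: polyOver_drop_poly.
  rewrite (_ : _ * _ = F.[p%:R] - F.[m0%:R] - p%:R ^+ 3 * (D.[p%:R] - D.[- p%:R])).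
    by rewrite rpredB // pdvdMr ?pdvd_pX // rpredB ?D_int ?rpredN ?rpred_nat.
  by rewrite -Fneg Fodd; ring.
rewrite pdvd_pXM // => F2.
have -> : F`_2 = 2%:R^-1 * (2%:R * F`_2) by rewrite mulKf.
by rewrite pdvdMl // pint_invn // coprime_lt_prime.
Qed.

End PIntegralPoly.

Lemma poch_gt0 (x : rat) k : 0 < x -> 0 < poch x k.
Proof. by move=> x_gt0; apply: prodr_gt0 => i _; rewrite ltr_wpDr. Qed.

Lemma pochS x k : poch x k.+1 = poch x k * (x + k%:R).
Proof. by rewrite /poch big_ord_recr. Qed.

Lemma poch_add x k l : poch x (k + l) = poch x k * poch (x + k%:R) l.
Proof.
rewrite /poch big_split_ord /=; congr (_ * _).
by apply: eq_bigr => i _; rewrite natrD addrA.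
Qed.

Lemma poch_reflect x s : poch (- s.+1%:R - x + 1) s = (-1) ^+ s * poch (x + 1) s.
Proof.
have := prodrN (I := 'I_s) predT (fun i => x + 1 + i%:R).
rewrite cardT size_enum_ord => <-; rewrite /poch (reindex_inj rev_ord_inj).
by apply: eq_bigr => i _ /=; have i_lt := ltn_ord i; rewrite natrB // -!natr1; ring.
Qed.

Section Weight.
Variables p n : nat.
Hypotheses (p_prime : prime p) (n_gt0 : (0 < n)%N) (n_lt_p : (n < p)%N).

Local Notation u i := (p%:R / (n * i.+1)%:R : rat).
Local Notation rho i := ((n * i.+1)%:R / (n * i.+1 + p)%:R : rat).

Definition weight m := (poch 1 m / poch (1 + p%:R / n%:R) m) ^+ n.

Let nS_neq0 i : ((n * i.+1)%:R : rat) != 0.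
Proof. by rewrite pnatr_eq0 muln_eq0 negb_or -lt0n n_gt0. Qed.

Let nSp_neq0 i : ((n * i.+1)%:R + p%:R : rat) != 0.
Proof. by rewrite -natrD pnatr_eq0 addn_eq0 negb_and muln_eq0 negb_or -lt0n n_gt0. Qed.

Let coprime_nS i : (i.+1 < p)%N -> coprime (n * i.+1) p.
Proof.
by move=> i_lt; rewrite coprimeMl !coprime_lt_prime ?n_gt0 ?n_lt_p ?(ltnW i_lt).
Qed.

Lemma u_pdvd1 i : (i.+1 < p)%N -> u i \in pdvd p 1.
Proof. by move=> i_lt; rewrite pdvd_pM_pint // pint_invn // coprime_nS. Qed.

Lemma rho_pdvd2 i : (i.+1 < p)%N -> rho i - 1 + u i \in pdvd p 2.
Proof.
move=> i_lt.
have -> : rho i - 1 + u i = p%:R ^+ 2 * ((n * i.+1 * (n * i.+1 + p))%:R)^-1.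
  rewrite (natrM _ (n * i.+1)) !natrD; move: (nS_neq0 i) (nSp_neq0 i).
  by move: (n * i.+1)%:R => N N0 Np0; field; rewrite N0 Np0.
rewrite pdvd_pXM_pint //; apply: pint_invn.
by rewrite coprimeMl coprime_addn_self coprime_nS.
Qed.

Lemma rho_sub1 i : (i.+1 < p)%N -> rho i - 1 \in pdvd p 1.
Proof.
move=> i_lt; rewrite -(addrK (u i) (rho i - 1)) rpredB ?u_pdvd1 //.
by rewrite (pdvdW p_prime (leqnSn 1)) ?rho_pdvd2.
Qed.

Lemma rho_pint i : (i.+1 < p)%N -> rho i \in pint p.
Proof.
move=> i_lt; have rho1 := rho_sub1 i_lt.
by rewrite -(subrK 1 (rho i)) rpredD ?rpred1 ?(pdvd_pint p_prime rho1).
Qed.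

Lemma weight0 : weight 0 = 1.
Proof. by rewrite /weight /poch !big_ord0 divr1 expr1n. Qed.

Lemma weight_prod m : weight m = (\prod_(i < m) rho i) ^+ n.
Proof.
rewrite /weight /poch -prodf_div; congr (_ ^+ _); apply: eq_bigr => i _.
by field; rewrite ?nat1r -?natrM -?natrD ?pnatr_eq0; lia.
Qed.

Lemma weight_recr m : weight m = weight m.+1 * (1 + u m) ^+ n.
Proof.
rewrite !weight_prod big_ord_recr /= exprMn -mulrA -exprMn.
have -> : rho m * (1 + u m) = 1.
  by field; rewrite ?nat1r -?natrM -?natrD ?pnatr_eq0; lia.
by rewrite expr1n mulr1.
Qed.

Lemma weight_pint m : (m < p)%N -> weight m \in pint p.
Proof.
move=> m_lt; rewrite weight_prod rpredX // rpred_prod // => i _.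
by apply: rho_pint; apply: leq_ltn_trans m_lt.
Qed.

Lemma weight_sub1 m : (m < p)%N -> weight m - 1 \in pdvd p 1.
Proof.
move=> m_lt; have i_lt (i : 'I_m) : (i.+1 < p)%N.
  exact: leq_ltn_trans (ltn_ord i) m_lt.
rewrite weight_prod subX1_pdvd //; first by apply: rpred_prod => i _; apply: rho_pint.
rewrite (eq_bigr (fun i : 'I_m => 1 + (rho i - 1))) => [|i _].
  by apply: prod1D_pdvd1 => // i _; apply: rho_sub1.
by rewrite addrC subrK.
Qed.

Lemma weight_last_sub1 : (2 < p)%N -> weight p.-1 - 1 \in pdvd p 2.
Proof.
move=> p_gt2; have i_lt (i : 'I_p.-1) : (i.+1 < p)%N by have := ltn_ord i; lia.
rewrite weight_prod subX1_pdvd //; first by apply: rpred_prod => i _; apply: rho_pint.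
set S := \sum_(i < p.-1) (rho i - 1).
have S2 : S \in pdvd p 2.
  have -> : S = \sum_(i < p.-1) (rho i - 1 + u i)
              - p%:R / n%:R * \sum_(i < p.-1) (i.+1%:R)^-1.
    rewrite /S mulr_sumr -sumrB; apply: eq_bigr => i _.
    by rewrite natrM invfM mulrA addrK.
  rewrite rpredB //; first by apply: rpred_sum => i _; apply: rho_pdvd2.
  rewrite (@pdvdM p 1 1) ?harmonic_pdvd //.
  by rewrite pdvd_pM_pint // pint_invn // coprime_lt_prime ?n_gt0.
rewrite (eq_bigr (fun i : 'I_p.-1 => 1 + (rho i - 1))) => [|i _].
  rewrite -(subrK S (_ - 1)) rpredD //.
  by apply: prod1D_pdvd2 => // i _; apply: rho_sub1.
by rewrite addrC subrK.
Qed.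

(* From (1 + u)^n = 1 + n u + C(n,2) u^2 (mod u^3) with u = p / (n (m + 1)). *)
Local Notation kappa := ('C(n, 2)%:R / n%:R ^+ 2 : rat).

Let kappa_pint : kappa \in pint p.
Proof.
by rewrite rpredM ?rpred_nat // -natrX pint_invn // coprimeXl // coprime_lt_prime ?n_gt0.
Qed.

Lemma weight_diff m : (m.+1 < p)%N ->
  m.+1%:R * (weight m - weight m.+1)
    - weight m.+1 * (p%:R + p%:R ^+ 2 * kappa / m.+1%:R) \in pdvd p 3.
Proof.
move=> m_lt; rewrite [weight m]weight_recr.
have -> : m.+1%:R * (weight m.+1 * (1 + u m) ^+ n - weight m.+1)
    - weight m.+1 * (p%:R + p%:R ^+ 2 * kappa / m.+1%:R)
  = weight m.+1 * m.+1%:R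
    * ((1 + u m) ^+ n - 1 - n%:R * u m - 'C(n, 2)%:R * u m ^+ 2).
  by field; rewrite ?nat1r -?natrM -?natrD ?pnatr_eq0; lia.
rewrite pdvdMl ?exp1D_pdvd3 ?u_pdvd1 //.
by rewrite rpredM ?rpred_nat ?weight_pint.
Qed.

Lemma weight_diff2 m : (m.+1 < p)%N ->
  m.+1%:R * (weight m - weight m.+1) - p%:R * weight m.+1 \in pdvd p 2.
Proof.
move=> m_lt; have w_int := weight_pint m_lt.
have -> : m.+1%:R * (weight m - weight m.+1) - p%:R * weight m.+1 =
    (m.+1%:R * (weight m - weight m.+1)
       - weight m.+1 * (p%:R + p%:R ^+ 2 * kappa / m.+1%:R))
    + p%:R ^+ 2 * (weight m.+1 * kappa / m.+1%:R) by ring.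
rewrite rpredD //; first by rewrite (pdvdW p_prime (leqnSn 2)) ?weight_diff.
rewrite pdvd_pXM_pint // rpredM ?(rpredM w_int kappa_pint) //.
by rewrite pint_invn ?coprime_lt_prime.
Qed.

Lemma sum_weight_pdvd2 U : (2 < p)%N -> U \is a polyOver (pint p) -> (size U < p)%N ->
  \sum_(m < p) U.[m%:R] * weight m \in pdvd p 2.
Proof.
move=> p_gt2 Uint Usize.
have [F Fint [F0 Fsize dF]] := pint_antidifference p_prime Uint Usize.
set K := p.-1; have K_lt : (K < p)%N by rewrite /K; lia.
set W := drop_poly 1 F.
have Wint : W \is a polyOver (pint p) by apply: polyOver_drop_poly.
have Wsize : (size W < p)%N by rewrite size_drop_poly; lia.
have W_int m : W.[m%:R] \in pint p by rewrite rpred_horner ?rpred_nat.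
have := sum_horner_by_parts weight K F0 dF; rewrite prednK ?prime_gt0 // => ->.
have sumW : \sum_(m < p) W.[m%:R] = W`_0 + \sum_(m < K) W.[m.+1%:R].
  by rewrite -(prednK (prime_gt0 p_prime)) big_ord_recl -horner_coef0.
have -> : F.[p%:R] * weight K
    + \sum_(m < K) W.[m.+1%:R] * (m.+1%:R * (weight m - weight m.+1)) =
  F.[p%:R] * (weight K - 1) + p%:R * (W.[p%:R] - W`_0)
    + \sum_(m < K) W.[m.+1%:R] * (m.+1%:R * (weight m - weight m.+1) - p%:R * weight m.+1)
    + p%:R * \sum_(m < K) W.[m.+1%:R] * (weight m.+1 - 1)
    + p%:R * \sum_(m < p) W.[m%:R].
  rewrite sumW (horner_coef0_eq0 _ F0) -/W.
  have -> : \sum_(m < K) W.[m.+1%:R] * (m.+1%:R * (weight m - weight m.+1)) =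
      \sum_(m < K) W.[m.+1%:R] * (m.+1%:R * (weight m - weight m.+1) - p%:R * weight m.+1)
      + p%:R * \sum_(m < K) W.[m.+1%:R] * (weight m.+1 - 1)
      + p%:R * \sum_(m < K) W.[m.+1%:R].
    by rewrite !mulr_sumr -!big_split; apply: eq_bigr => m _ /=; ring.
  ring.
have Fp : F.[p%:R] \in pdvd p 1 by rewrite horner_pdvd1 // pdvd_p.
rewrite !rpredD //.
- by rewrite (@pdvdM p 1 1) // weight_sub1.
- by rewrite (@pdvdM p 1 1) ?horner_sub_coef0_pdvd1 // pdvd_p.
- by apply: rpred_sum => m _; rewrite pdvdMl ?weight_diff2 ?(leq_ltn_trans (ltn_ord m)).
- rewrite (@pdvdM p 1 1) ?rpred_sum // => [|m _]; first by rewrite pdvd_p.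
  by rewrite pdvdMl // weight_sub1 ?(leq_ltn_trans (ltn_ord m)).
by rewrite (@pdvdM p 1 1) ?sum_horner_pdvd1 // pdvd_p.
Qed.

Lemma sum_horner_weight_div_pdvd1 W : (2 < p)%N ->
    W \is a polyOver (pint p) -> (size W < p)%N -> W`_1 \in pdvd p 1 ->
  \sum_(m < p.-1) W.[m.+1%:R] * weight m.+1 / m.+1%:R \in pdvd p 1.
Proof.
move=> p_gt2 Wint Wsize W1; set K := p.-1; have K_lt : (K < p)%N by rewrite /K; lia.
set W' := drop_poly 1 W.
have W'int : W' \is a polyOver (pint p) by apply: polyOver_drop_poly.
have W'size : (size W' < p)%N by rewrite size_drop_poly; lia.
have sumW' : \sum_(m < p) W'.[m%:R] = W`_1 + \sum_(m < K) W'.[m.+1%:R].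
  by rewrite -(prednK (prime_gt0 p_prime)) big_ord_recl horner_coef0 coef_drop_poly.
have -> : \sum_(m < K) W.[m.+1%:R] * weight m.+1 / m.+1%:R =
    \sum_(m < K) W.[m.+1%:R] / m.+1%:R * (weight m.+1 - 1)
    + W`_0 * \sum_(m < K) (m.+1%:R)^-1
    + (\sum_(m < p) W'.[m%:R] - W`_1).
  rewrite sumW' (addrC W`_1) addrK mulr_sumr -!big_split; apply: eq_bigr => m _ /=.
  rewrite (horner_take_drop W 1) big_ord1 expr0 mulr1 expr1 -/W'.
  by field; rewrite nat1r pnatr_eq0.
apply: rpredD; first apply: rpredD.
- apply: rpred_sum => m _; have m_lt := leq_ltn_trans (ltn_ord m) K_lt.
  rewrite pdvdMl ?weight_sub1 // rpredM ?rpred_horner ?rpred_nat //.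
  by rewrite pint_invn ?coprime_lt_prime.
- by rewrite pdvdMl ?harmonic_pdvd ?(polyOverP Wint).
by rewrite rpredB ?sum_horner_pdvd1.
Qed.

Lemma sum_weight_pdvd3 V F : (2 < p)%N ->
    F \is a polyOver (pint p) -> F`_0 = 0 -> (size F <= p)%N ->
    (forall x, F.[x + 1] - F.[x] = V.[x]) -> F`_2 \in pdvd p 1 ->
  \sum_(m < p) V.[m%:R] * weight m \in pdvd p 3.
Proof.
move=> p_gt2 Fint F0 Fsize dF F2; set K := p.-1; have K_lt : (K < p)%N by rewrite /K; lia.
set W := drop_poly 1 F.
have Wint : W \is a polyOver (pint p) by apply: polyOver_drop_poly.
have Wsize : (size W < p)%N by rewrite size_drop_poly; lia.
have := sum_horner_by_parts weight K F0 dF; rewrite prednK ?prime_gt0 // => ->.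
have sumWw : \sum_(m < p) W.[m%:R] * weight m
    = F`_1 + \sum_(m < K) W.[m.+1%:R] * weight m.+1.
  rewrite -(prednK (prime_gt0 p_prime)) big_ord_recl horner_coef0 weight0 mulr1.
  by rewrite coef_drop_poly.
set D := drop_poly 3 F.
have Fp : F.[p%:R] = p%:R * F`_1 + p%:R ^+ 2 * F`_2 + p%:R ^+ 3 * D.[p%:R].
  by rewrite (horner_take_drop F 3) !big_ord_recr big_ord0 /= F0; ring.
have -> : F.[p%:R] * weight K
    + \sum_(m < K) W.[m.+1%:R] * (m.+1%:R * (weight m - weight m.+1)) =
  F.[p%:R] * (weight K - 1) + p%:R ^+ 3 * D.[p%:R] + p%:R ^+ 2 * F`_2
    + \sum_(m < K) W.[m.+1%:R] * (m.+1%:R * (weight m - weight m.+1)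
         - weight m.+1 * (p%:R + p%:R ^+ 2 * kappa / m.+1%:R))
    + p%:R * \sum_(m < p) W.[m%:R] * weight m
    + p%:R ^+ 2 * kappa * \sum_(m < K) W.[m.+1%:R] * weight m.+1 / m.+1%:R.
  have -> : \sum_(m < K) W.[m.+1%:R] * (m.+1%:R * (weight m - weight m.+1)) =
      \sum_(m < K) W.[m.+1%:R] * (m.+1%:R * (weight m - weight m.+1)
         - weight m.+1 * (p%:R + p%:R ^+ 2 * kappa / m.+1%:R))
      + p%:R * \sum_(m < K) W.[m.+1%:R] * weight m.+1
      + p%:R ^+ 2 * kappa * \sum_(m < K) W.[m.+1%:R] * weight m.+1 / m.+1%:R.
    by rewrite !mulr_sumr -!big_split; apply: eq_bigr => m _ /=; ring.
  by rewrite sumWw Fp; ring.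
rewrite !rpredD //.
- by rewrite (@pdvdM p 1 2) ?weight_last_sub1 ?horner_pdvd1 ?pdvd_p.
- by rewrite pdvd_pXM_pint // rpred_horner ?rpred_nat ?polyOver_drop_poly.
- by rewrite (@pdvdM p 2 1) ?pdvd_pX.
- apply: rpred_sum => m _; have m_lt := leq_ltn_trans (ltn_ord m) K_lt.
  by rewrite pdvdMl ?weight_diff ?rpred_horner ?rpred_nat.
- by rewrite (@pdvdM p 1 2) ?pdvd_p ?sum_weight_pdvd2.
rewrite (@pdvdM p 2 1) ?(pdvdMr (pdvd_pX p_prime 2) kappa_pint) //.
by rewrite sum_horner_weight_div_pdvd1 // coef_drop_poly.
Qed.

End Weight.

Definition rising_poly (s : nat) : {poly rat} := \prod_(i < s) ('X + i.+1%:R%:P).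

Lemma horner_rising_poly s x : (rising_poly s).[x] = poch (x + 1) s.
Proof.
rewrite /rising_poly horner_prod; apply: eq_bigr => i _; rewrite !hornerE -natr1; ring.
Qed.

Lemma size_rising_poly s : size (rising_poly s) = s.+1.
Proof.
rewrite /rising_poly (eq_bigr (fun i : 'I_s => 'X - (- i.+1%:R)%:P)) => [|i _].
  by rewrite size_prod_XsubC [index_enum _]unlock -enumT -cardT card_ord.
by rewrite polyCN opprK.
Qed.

Section PochhammerSum.
Variables n r p : nat.
Hypotheses (p_prime : prime p) (n_gt2 : (2 < n)%N).
Hypotheses (rnp : (r.+1 * n + 1 < p)%N) (parity : ~~ odd n || odd r.+2).

Local Notation V := (rising_poly r.+1 ^+ n).
Local Notation a := (p%:R / n%:R - r.+2%:R + 2 : rat).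

Let n_gt0 : (0 < n)%N. Proof. exact: ltnW (ltnW n_gt2). Qed.
Let n_lt_p : (n < p)%N. Proof. by have := leq_pmull n (ltn0Sn r); lia. Qed.
Let p_gt2 : (2 < p)%N. Proof. exact: ltn_trans n_gt2 n_lt_p. Qed.
Let r_lt : (r.+1 < p)%N. Proof. by have := leq_pmulr r.+1 n_gt0; lia. Qed.
Let nr_lt : (n * r < p)%N. Proof. by move: rnp; rewrite mulSn mulnC; lia. Qed.

Lemma horner_rising_exp (x : rat) : V.[x] = poch (x + 1) r.+1 ^+ n.
Proof. by rewrite horner_exp horner_rising_poly. Qed.

Lemma rising_exp_polyOver : V \is a polyOver (pint p).
Proof. by rewrite rpredX // rpred_prod // => i _; rewrite polyOverXaddC rpred_nat. Qed.

Lemma size_rising_exp : (size V < p)%N.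
Proof.
have := size_exp (rising_poly r.+1) n; rewrite size_rising_poly /= => size_pred.
by rewrite (leq_ltn_trans (leqSpred _)) // size_pred -addn1.
Qed.

Lemma rising_exp_reflect (x : rat) : V.[- r.+2%:R - x] = V.[x].
Proof.
rewrite !horner_rising_exp poch_reflect exprMn -exprM -signr_odd oddM.
by move: parity => /=; case: (odd r) (odd n) => [] [] //= _; rewrite ?expr0 ?mul1r.
Qed.

Lemma rising_exp_root i : (0 < i < r.+2)%N -> V.[- i%:R] = 0.
Proof.
case: i => // j /andP[_]; rewrite ltnS => j_lt.
rewrite horner_rising_exp /poch (bigD1 (Ordinal j_lt)) //=.
by rewrite -natr1 opprD subrK addNr mul0r expr0n gtn_eqF.
Qed.

Lemma rising_exp_top m : (p - r.+2 < m < p)%N -> V.[m%:R] \in pdvd p 3.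
Proof.
case/andP=> m_gt m_lt; have j_lt : (p - m.+1 < r.+1)%N by lia.
rewrite horner_rising_exp /poch (bigD1 (Ordinal j_lt)) //=.
have -> : m%:R + 1 + (p - m.+1)%:R = p%:R :> rat.
  by rewrite natr1 -natrD; congr (_%:R); lia.
rewrite exprMn (pdvdW p_prime (_ : 3 <= n)%N) // pdvd_pXM_pint //.
by rewrite rpredX // rpred_prod // => i _; rewrite natr1 -natrD rpred_nat.
Qed.

Lemma sum_rising_exp_weight_pdvd3 : \sum_(m < p) V.[m%:R] * weight p n m \in pdvd p 3.
Proof.
have [F Fint [F0 Fsize dF]] :=
  pint_antidifference p_prime rising_exp_polyOver size_rising_exp.
apply: (sum_weight_pdvd3 p_prime n_gt0 n_lt_p p_gt2 Fint F0 Fsize dF).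
apply: (antidifference_coef2_pdvd1 p_prime (q := r.+2)) => //.
- exact: rising_exp_root.
- exact: rising_exp_reflect.
exact: rising_exp_top.
Qed.

Let a_add i : (i <= r)%N -> a + i%:R = (p - n * (r - i))%:R / n%:R.
Proof.
move=> i_le; have nri := leq_mul (leqnn n) (leq_subr i r).
rewrite natrB ?natrM ?natrB ?(leq_trans nri (ltnW nr_lt)) //.
by field; rewrite pnatr_eq0 -lt0n.
Qed.

Lemma poch_inv_pint k : (k <= r)%N -> (poch a k)^-1 \in pint p.
Proof.
move=> k_le; rewrite /poch -prodfV rpred_prod // => i _.
have i_lt : (i < r)%N by apply: leq_trans k_le.
rewrite (a_add (ltnW i_lt)) invf_div pint_divn // coprime_lt_prime //.
rewrite subn_gt0 ltn_subrL muln_gt0 n_gt0 subn_gt0 i_lt (prime_gt0 p_prime) /=.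
by rewrite andbT (leq_ltn_trans (leq_mul (leqnn n) (leq_subr i r))).
Qed.

Lemma poch_ratio_head_pdvd3 k : (k <= r)%N ->
  (p ^ n)%N%:R * ((poch 1 k) ^+ n / (poch a k) ^+ n) \in pdvd p 3.
Proof.
move=> k_le; rewrite natrX -exprVn -exprMn (pdvdW p_prime (_ : 3 <= n)%N) //.
rewrite pdvd_pXM_pint // rpredX // rpredM ?poch_inv_pint //.
by rewrite rpred_prod // => i _; rewrite rpredD ?rpred1 ?rpred_nat.
Qed.

Lemma poch_ratio_tail m :
  (p ^ n)%N%:R * ((poch 1 (r.+1 + m)) ^+ n / (poch a (r.+1 + m)) ^+ n)
    = (n%:R / poch a r) ^+ n * (V.[m%:R] * weight p n m).
Proof.
have a_r : a + r%:R = p%:R / n%:R by rewrite a_add // subnn muln0 subn0.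
have pn_gt0 : 0 < p%:R / n%:R :> rat by rewrite divr_gt0 ?ltr0n // prime_gt0.
have a_gt0 : 0 < a.
  have := a_add (leq0n r); rewrite addr0 subn0 => ->.
  by rewrite divr_gt0 ?ltr0n ?subn_gt0.
have Par_neq0 : poch a r != 0 by rewrite gt_eqF // poch_gt0.
have Pr_neq0 : poch (1 + p%:R / n%:R) m != 0 by rewrite gt_eqF // poch_gt0 // addr_gt0.
have -> : poch 1 (r.+1 + m) = poch 1 m * poch (m%:R + 1) r.+1.
  by rewrite addnC poch_add addrC.
have -> : poch a (r.+1 + m) = poch a r * (p%:R / n%:R) * poch (1 + p%:R / n%:R) m.
  rewrite poch_add pochS; congr (_ * _ * poch _ _); first exact: a_r.
  by rewrite -!natr1; ring.
rewrite horner_rising_exp /weight natrX -expr_div_n -!exprMn; congr (_ ^+ n).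
by field; rewrite Pr_neq0 Par_neq0 !pnatr_eq0 -!lt0n n_gt0 prime_gt0.
Qed.

Lemma pochhammer_sum_pdvd3 :
  (p ^ n)%N%:R * \sum_(k < p) (poch 1 k) ^+ n / (poch a k) ^+ n \in pdvd p 3.
Proof.
rewrite mulr_sumr (sum_ord_split
  (fun k => (p ^ n)%N%:R * ((poch 1 k) ^+ n / (poch a k) ^+ n)) (ltnW r_lt)).
rewrite rpredD //.
  by apply: rpred_sum => k _; apply: poch_ratio_head_pdvd3; rewrite -ltnS.
under eq_bigr do rewrite poch_ratio_tail.
rewrite -mulr_sumr pdvdMl ?rpredX ?rpredM ?rpred_nat ?poch_inv_pint //.
have := sum_ord_split (fun m => V.[m%:R] * weight p n m) (leq_subr r.+1 p).
rewrite subKn 1?ltnW // => /(canLR (addrK _)) <-.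
rewrite rpredB ?sum_rising_exp_weight_pdvd3 // rpred_sum // => j _.
by rewrite pdvdMr ?rising_exp_top ?weight_pint //; have := ltn_ord j; lia.
Qed.

End PochhammerSum.

Lemma pochhammer_sum_pdvd3_q1 n p : prime p -> (2 < n)%N -> (n < p)%N ->
  (p ^ n)%N%:R * \sum_(k < p) (poch 1 k) ^+ n / (poch (p%:R / n%:R - 1%:R + 2) k) ^+ n
    \in pdvd p 3.
Proof.
move=> p_prime n_gt2 n_lt_p; rewrite mulr_sumr rpred_sum // => k _.
have -> : p%:R / n%:R - 1%:R + 2 = 1 + p%:R / n%:R :> rat by ring.
rewrite -expr_div_n natrX (pdvdW p_prime (_ : 3 <= n)%N) // pdvd_pXM_pint //.
exact: (weight_pint p_prime (ltnW (ltnW n_gt2)) n_lt_p (ltn_ord k)).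
Qed.

Theorem theorem1p2 (n q p : nat) :
  (2 < n)%N -> (0 < q)%N -> (~~ odd n || odd q) ->
  prime p -> (maxn n ((q - 1) * n + 1) < p)%N ->
  rat_cong_mod p 3
    ((p ^ n)%N%:R *
       \sum_(k < p) (poch 1 k) ^+ n /
                    (poch (p%:R / n%:R - q%:R + 2) k) ^+ n)
    0.
Proof.
move=> n_gt2 q_gt0 parity p_prime; rewrite gtn_max => /andP[n_lt_p qnp].
apply: pdvd_rat_cong_mod => //.
case: q q_gt0 parity qnp => [|[|r]] // _ parity qnp.
  exact: pochhammer_sum_pdvd3_q1.
by apply: pochhammer_sum_pdvd3; rewrite // subn1 in qnp.
Qed.
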